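(* Let $T$ be a tree with $ex(T)\ge1$, and let $g:V(T)\rightarrow[0,1]$ be any minimum resolving function of $T$. Then, for each $v\in M_2(T)$ with $ter(v)=\alpha\ge2$, $g(V(T_v)-\{v\})=\frac{\alpha}{2}$, and $\sum_{v\in M_2(T)}(g(V(T_v))-g(v))=\dim_f(T)$.
   Context: $d(x,y)$ is the distance in the tree. For a function $g$ on $V(T)$ and $U\subseteq V(T)$, $g(U)=\sum_{s\in U}g(s)$. $R\{x,y\}=\{z: d(x,z)\ne d(y,z)\}$; $g:V(T)\to[0,1]$ is a resolving function if $g(R\{x,y\})\ge1$ for all distinct $x,y$; $\dim_f(T)$ is the minimum of $g(V(T))$ over resolving functions, and a minimum resolving function is one attaining it. A leaf is a vertex of degree one; a major vertex has degree at least three. A leaf $\ell$ is a terminal vertex of a major vertex $v$ if $d(\ell,v)<d(\ell,w)$ for every other major vertex $w$. $ter(v)$ is the number of terminal vertices of $v$; an exterior major vertex is a major vertex with $ter(v)>0$. $M(T)$ is the set of exterior major vertices, $ex(T)=|M(T)|$, $M_1(T)=\{w\in M(T): ter(w)=1\}$, $M_2(T)=\{w\in M(T): ter(w)\ge2\}$. For $v\in M(T)$, $T_v$ is the subtree induced by $v$ and all vertices on the paths joining $v$ to its terminal vertices. *)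

From mathcomp Require Import all_boot all_order all_algebra.
From mathcomp Require Import boolp.
Set Implicit Arguments. Unset Strict Implicit. Unset Printing Implicit Defensive.
Import Order.TTheory GRing.Theory Num.Theory.
Local Open Scope ring_scope.

Section Tree.
Variable V : finType.
Variable e : rel V.

Definition is_tree : Prop :=
  [/\ symmetric e, irreflexive e,
      (forall x y, connect e x y) &
      (forall p : seq V, uniq p -> (3 <= size p)%N -> ~~ cycle e p)].

Fixpoint ball (n : nat) (x : V) : {set V} :=
  match n with
  | 0 => [set x]
  | n'.+1 => ball n' x :|: [set y | [exists z in ball n' x, e z y]]
  end.

(* graph distance d(x,y): least n with y within n steps of x
   (all distances in a connected graph on V are < #|V|) *)
Definition dist (x y : V) : nat :=
  find (fun n => y \in ball n x) (iota 0 #|V|).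

Definition deg (v : V) : nat := #|[set w | e v w]|.
Definition leaf (v : V) : bool := deg v == 1%N.
Definition major (v : V) : bool := (3 <= deg v)%N.

Definition terminal (v l : V) : bool :=
  [&& major v, leaf l & [forall w, (major w && (w != v)) ==> (dist l v < dist l w)%N]].
Definition ter (v : V) : nat := #|[set l | terminal v l]|.

Definition Mset : {set V} := [set v | major v && (0 < ter v)%N].
Definition ex : nat := #|Mset|.
Definition M1 : {set V} := [set w in Mset | ter w == 1%N].
Definition M2 : {set V} := [set w in Mset | (2 <= ter w)%N].

Definition on_path (x y u : V) : Prop :=
  exists p : seq V, [&& path e x p, last x p == y, uniq (x :: p) & u \in x :: p].

Definition Tv (v : V) : {set V} :=
  [set u | `[< exists2 l, terminal v l & on_path v l u >]].

Definition Rset (x y : V) : {set V} := [set z | dist x z != dist y z].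

Variable R : realFieldType.

Definition gsum (g : V -> R) (U : {set V}) : R := \sum_(s in U) g s.

Definition resolving (g : V -> R) : Prop :=
  (forall s, 0 <= g s <= 1) /\
  (forall x y, x != y -> 1 <= gsum g (Rset x y)).

Definition is_dimf (x : R) : Prop :=
  (exists2 g, resolving g & gsum g setT = x) /\
  (forall h, resolving h -> x <= gsum h setT).

Definition min_resolving (g : V -> R) : Prop :=
  resolving g /\ (forall h, resolving h -> gsum g setT <= gsum h setT).

End Tree.

(* For an edge a b of the tree, the vertices closer to b than to a form the
   branch of T - ab containing b.  If l is a terminal vertex of v, the branch
   at v towards l is exactly the leg from v to l, and legs of distinct
   terminal vertices of v are disjoint branches at distinct neighbours
   u1, u2 of v.  Every vertex outside these two branches is equidistant from
   u1 and u2, so a resolving function g weighs the two legs together at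
   least 1; summing over pairs gives g(V(T_v) - v) >= ter(v)/2.
   Conversely, putting weight 1/2 on every terminal vertex of every vertex of
   M_2(T) is resolving: x <> y are resolved by every vertex of the branches
   hanging off their midpoint towards x and towards y, and these contain two
   such terminal vertices, since a branch containing a major vertex contains
   two terminal vertices of its deepest major vertex (and otherwise the
   midpoint itself is major).  The sets V(T_v) - v being pairwise disjoint,
   a minimum resolving g satisfies
     sum_v ter(v)/2 <= sum_v g(V(T_v) - v) <= g(V) <= sum_v ter(v)/2,
   so all these inequalities are equalities. *)

From mathcomp Require Import all_boot all_order all_algebra.
From mathcomp Require Import boolp.
From mathcomp Require Import zify lra.
Set Implicit Arguments. Unset Strict Implicit. Unset Printing Implicit Defensive.
Import Order.TTheory GRing.Theory Num.Theory.

(* Plain [lia] gets very slow in contexts holding many non-arithmetic facts. *)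
Ltac nat_lia := repeat match goal with
  | H : ?T |- _ => lazymatch T with
       | is_true (_ <= _) => fail
       | @eq nat _ _ => fail
       | _ => clear H
       end
  end; lia.

Section Balls.
Variables (V : finType) (e : rel V).
Local Notation ball := (ball e).

Lemma in_ballS n x y :
  (y \in ball n.+1 x) = (y \in ball n x) || [exists z in ball n x, e z y].
Proof. by rewrite /= !inE. Qed.

Lemma in_ball0 x y : (y \in ball 0 x) = (y == x).
Proof. by rewrite /= inE. Qed.

Lemma ball_mono m n x y : m <= n -> y \in ball m x -> y \in ball n x.
Proof.
elim: n => [|n IH]; first by rewrite leqn0 => /eqP ->.
by rewrite leq_eqVlt => /orP [/eqP -> // | /IH H /H]; rewrite in_ballS => ->.
Qed.

Lemma in_ball_edge n x z y : z \in ball n x -> e z y -> y \in ball n.+1 x.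
Proof.
by move=> Hz ezy; rewrite in_ballS; apply/orP; right; apply/existsP; exists z; rewrite Hz.
Qed.

Lemma ball_add a b x z y : z \in ball a x -> y \in ball b z -> y \in ball (a + b) x.
Proof.
move=> Hz; elim: b y => [|b IH] y; first by rewrite in_ball0 addn0 => /eqP ->.
rewrite in_ballS addnS => /orP [/IH /(ball_mono (leqnSn _)) // | /existsP [w /andP [Hw ew]]].
exact: in_ball_edge (IH _ Hw) ew.
Qed.

Lemma last_path_in_ball x p : path e x p -> last x p \in ball (size p) x.
Proof.
elim: p x => [|a p IH] x /=; first by rewrite in_ball0.
move=> /andP [exa /IH pp]; apply: (@ball_add 1 (size p) x a) pp.
by apply: (in_ball_edge (z := x)); rewrite ?in_ball0.
Qed.

Hypothesis sym_e : symmetric e.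

Lemma in_ball_sym n x y : y \in ball n x -> x \in ball n y.
Proof.
elim: n y => [|n IH] y; first by rewrite !in_ball0 eq_sym.
rewrite in_ballS => /orP [/IH /(ball_mono (leqnSn _)) // | /existsP [w /andP [Hw ew]]].
rewrite -add1n; apply: ball_add (IH _ Hw).
by apply: (in_ball_edge (z := y)); rewrite ?in_ball0 // sym_e.
Qed.

End Balls.

Section Weights.
Variables (V : finType) (R : realFieldType).
Local Open Scope ring_scope.
Implicit Types (g : V -> R) (A B : {set V}).

Lemma gsum_subset g A B : (forall s, 0 <= g s) -> A \subset B -> gsum g A <= gsum g B.
Proof.
move=> g0 sAB; rewrite /gsum (@big_setID _ _ _ _ B A) /= (setIidPr sAB).
by rewrite lerDl sumr_ge0.
Qed.

Lemma gsumU g A B : [disjoint A & B] -> gsum g (A :|: B) = gsum g A + gsum g B.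
Proof. by move=> dAB; rewrite /gsum -bigU //; apply: eq_bigl => s; rewrite !inE. Qed.

Lemma gsum_setD1 g A v : v \in A -> gsum g (A :\ v) = gsum g A - g v.
Proof. by move=> vA; rewrite /gsum (big_setD1 v vA) /= addrC addrK. Qed.

Lemma sum_gsum_disjoint_le (I : finType) (S : {set I}) (F : I -> {set V}) g B :
  (forall s, 0 <= g s) -> {in S &, forall i j, i != j -> [disjoint F i & F j]} ->
  {in S, forall i, F i \subset B} -> \sum_(i in S) gsum g (F i) <= gsum g B.
Proof.
move=> g0 disjF subF.
pose F' i := if i \in S then F i else set0.
have disjF' i j : i != j -> [disjoint F' i & F' j].
  rewrite /F'; case: ifP => Si; case: ifP => Sj; rewrite -?setI_eq0 ?setI0 ?set0I //.
  by rewrite setI_eq0; apply: disjF.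
have -> : \sum_(i in S) gsum g (F i) = gsum g (\bigcup_i F' i).
  rewrite /gsum (partition_disjoint_bigcup _ _ disjF') [LHS]big_mkcond /=.
  by apply: eq_bigr => i _; rewrite /F'; case: ifP => // _; rewrite big_set0.
apply: gsum_subset => //; apply/bigcupsP => i _; rewrite /F'.
by case: ifP => Si; [apply: subF | apply: sub0set].
Qed.

Lemma ler_sum_eq (I : finType) (P : pred I) (F G : I -> R) :
  (forall i, P i -> F i <= G i) -> \sum_(i | P i) G i <= \sum_(i | P i) F i ->
  forall i, P i -> F i = G i.
Proof.
move=> FG GF i Pi; apply/eqP; rewrite eq_sym -subr_eq0; apply/eqP.
apply: (psumr_eq0P (P := P) (F := fun i => G i - F i)) => // [j Pj|].
  by rewrite subr_ge0 FG.
apply/eqP; rewrite eq_le sumrB subr_le0 GF subr_ge0 /=.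
by apply: ler_sum => j Pj; rewrite FG.
Qed.

Lemma half_card_le_sum (I : finType) (T : {set I}) (x : I -> R) : (1 < #|T|)%N ->
  {in T &, forall i j, i != j -> 1 <= x i + x j} -> #|T|%:R / 2 <= \sum_(i in T) x i.
Proof.
move=> T2 H.
suff : 0 <= \sum_(i in T) (x i *+ 2 - 1).
  by rewrite sumrB sumr_const sumrMnl mulr2n; lra.
case: (boolP [exists i in T, x i < 2^-1]); last first.
  move/existsPn => Hall; apply: sumr_ge0 => i iT.
  by have := Hall i; rewrite iT /= -leNgt [x i *+ 2]mulr2n; lra.
(* every other x j exceeds 1/2, and pairing i0 with one of them compensates for x i0 *)
case/existsP => i0 /andP [i0T hi0].
have [j0 j0T j0i] : exists2 j0, j0 \in T & j0 != i0.
  case/card_gt1P: T2 => a [b [aT bT ab]].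
  by case: (eqVneq a i0) => [E|ai]; [exists b; rewrite // -E eq_sym | exists a].
rewrite (bigD1 i0) //= (bigD1 j0) /=; last by rewrite j0T j0i.
have rest : 0 <= \sum_(i | (i \in T) && (i != i0) && (i != j0)) (x i *+ 2 - 1).
  apply: sumr_ge0 => i /andP [/andP [iT ii0] _].
  by have := H i i0 iT i0T ii0; rewrite mulr2n; lra.
by have := H j0 i0 j0T i0T j0i; move: rest; rewrite !mulr2n; lra.
Qed.

End Weights.

Section Tree.
Variables (V : finType) (e : rel V).
Hypotheses (sym_e : symmetric e) (irr_e : irreflexive e).
Hypothesis conn_e : forall x y, connect e x y.
Hypothesis acyc_e : forall p : seq V, uniq p -> 3 <= size p -> ~~ cycle e p.
Local Notation ball := (ball e).
Local Notation d := (dist e).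

Lemma exists_ball_lt_card x y : exists2 n, n < #|V| & y \in ball n x.
Proof.
case/connectP: (conn_e x y) => p pp ->.
case: (shortenP pp) => p' pp' up' _.
exists (size p'); last exact: last_path_in_ball.
by have := max_card (mem (x :: p')); rewrite (card_uniqP up').
Qed.

Lemma in_ballE n x y : (y \in ball n x) = (d x y <= n).
Proof.
have [m ltm Hm] := exists_ball_lt_card x y.
have Hfind : has (fun n => y \in ball n x) (iota 0 #|V|).
  by apply/hasP; exists m; rewrite // mem_iota.
have ball_d : y \in ball (d x y) x.
  by have := nth_find 0 Hfind; rewrite has_find size_iota in Hfind; rewrite nth_iota.
apply/idP/idP => [Hn|]; last by move/ball_mono; apply.
rewrite leqNgt; apply/negP => lt.
have := before_find 0 lt; rewrite has_find size_iota in Hfind.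
by rewrite nth_iota ?Hn //; rewrite /dist in lt; nat_lia.
Qed.

Lemma distC x y : d x y = d y x.
Proof.
by apply/eqP; rewrite eqn_leq -!in_ballE; apply/andP; split; apply: in_ball_sym;
  rewrite // in_ballE.
Qed.

Lemma dist_eq0 x y : (d x y == 0) = (x == y).
Proof. by rewrite -leqn0 -in_ballE in_ball0 eq_sym. Qed.

Lemma distxx x : d x x = 0.
Proof. by apply/eqP; rewrite dist_eq0. Qed.

Lemma dist_gt0 x y : (0 < d x y) = (x != y).
Proof. by rewrite lt0n dist_eq0. Qed.

Lemma dist_triangle x y z : d x z <= d x y + d y z.
Proof. by rewrite -in_ballE; apply: (ball_add (z := y)); rewrite in_ballE. Qed.

Lemma dist_edge x y : e x y -> d x y = 1.
Proof.
move=> exy; apply/eqP; rewrite eqn_leq -in_ballE (in_ball_edge (z := x)) ?in_ball0 //=.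
by rewrite dist_gt0; apply: contraTneq exy => ->; rewrite irr_e.
Qed.

Lemma dist_edge_le x y z : e x y -> d x z <= (d y z).+1.
Proof. by move=> exy; have := dist_triangle x y z; rewrite (dist_edge exy). Qed.

Lemma dist_S_neighbour x z n : d x z = n.+1 -> exists2 y, e x y & d y z = n.
Proof.
move=> Hd.
have : x \in ball n.+1 z by rewrite in_ballE distC Hd.
rewrite in_ballS in_ballE distC Hd ltnn /= => /existsP [w /andP [Hw ew]].
rewrite sym_e in ew; exists w => //.
by move: Hw; rewrite in_ballE distC; have := dist_edge_le z ew; nat_lia.
Qed.

Lemma dist_midpoint x y i : i <= d x y -> exists m, d x m = i /\ d m y = d x y - i.
Proof.
elim: i => [|i IH] hi; first by exists x; rewrite distxx subn0.
have [m [h1 h2]] := IH (ltnW hi).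
have [m' em' Hm'] : exists2 m', e m m' & d m' y = d x y - i.+1.
  by apply: dist_S_neighbour; nat_lia.
exists m'; split => //.
have := dist_triangle x m m'; rewrite (dist_edge em'); have := dist_triangle x m' y; nat_lia.
Qed.

Definition avoid (a : V) : rel V := fun u v => [&& u != a, v != a & e u v].

Lemma avoid_sym a : symmetric (avoid a).
Proof. by move=> u v; rewrite /avoid andbCA sym_e. Qed.

Lemma path_avoid a x p : path e a p -> x \notin a :: p -> path (avoid x) a p.
Proof.
elim: p a => [|b p IH] a //= /andP [eab pp].
rewrite !inE !negb_or => /and3P [xa xb xp].
by rewrite /avoid eq_sym xa eq_sym xb eab /= IH // inE negb_or xb.
Qed.

Lemma path_avoid_notin a x p : path (avoid a) x p -> a \notin p.
Proof.
elim: p x => [|b p IH] x //= /andP [/and3P [_ hb _] pp].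
by rewrite inE negb_or eq_sym hb (IH _ pp).
Qed.

(* A path from a to b avoiding x would close a cycle x a ... b x. *)
Lemma avoid_neighbours_disconnected x a b :
  e x a -> e x b -> a != b -> ~~ connect (avoid x) a b.
Proof.
move=> exa exb neab; apply/negP => /connectP [p pp Eb].
move: exb neab; rewrite Eb.
case: (shortenP pp) => p' pp' up' subp' exb neab.
have xp' : x \notin p'.
  by apply: contra (path_avoid_notin pp) => /subp'.
have xa : x != a by apply: contraTneq exa => <-; rewrite irr_e.
have Hu : uniq (x :: a :: p') by rewrite /= inE negb_or xa xp'; rewrite /= in up'.
have Hs : 3 <= size (x :: a :: p').
  by case: p' {pp' up' subp' exb xp' Hu} => [|? ?] //= in neab *; rewrite eqxx in neab.
have Hc : cycle e (x :: a :: p').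
  rewrite /= exa rcons_path (sub_path _ pp') /=; last by move=> u v /and3P [].
  by rewrite sym_e.
by have := acyc_e Hu Hs; rewrite Hc.
Qed.

Lemma connect_avoid_closer a z w : w != a -> d w z <= d a z -> connect (avoid a) w z.
Proof.
move Hn: (d w z) => n; elim: n w Hn => [|n IH] w Hn wa le.
  by move/eqP: Hn; rewrite dist_eq0 => /eqP ->.
have [w' ew' Hw'] := dist_S_neighbour Hn.
have w'a : w' != a by apply/eqP => E; rewrite E in Hw'; nat_lia.
apply: (connect_trans (y := w')); last by apply: IH => //; nat_lia.
by apply: connect1; rewrite /avoid wa w'a ew'.
Qed.

Lemma nearer_neighbour_uniq a b c z :
  e a b -> e a c -> d b z <= d a z -> d c z <= d a z -> b = c.
Proof.
move=> eab eac hb hc; apply/eqP; apply: contraT => bc.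
have ba : b != a by apply: contraTneq eab => ->; rewrite irr_e.
have ca : c != a by apply: contraTneq eac => ->; rewrite irr_e.
have : connect (avoid a) b c.
  apply: (connect_trans (connect_avoid_closer ba hb)).
  by rewrite (sym_connect_sym (@avoid_sym a)) connect_avoid_closer.
by rewrite (negbTE (avoid_neighbours_disconnected eab eac bc)).
Qed.

Lemma dist_edge_cases a b z : e a b -> d b z = (d a z).+1 \/ d a z = (d b z).+1.
Proof.
move=> eab; have eba : e b a by rewrite sym_e.
have h1 := dist_edge_le z eab; have h2 := dist_edge_le z eba.
case: (ltngtP (d a z) (d b z)) => H; [left|right|]; try nat_lia.
exfalso; case Ez: (d a z) => [|n].
  by move/eqP: (Ez); rewrite H dist_eq0 => /eqP Ebz; move/eqP: Ez;
    rewrite dist_eq0 -Ebz => /eqP Eab; rewrite Eab irr_e in eab.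
have [a' ea' Ha'] := dist_S_neighbour Ez.
have ba' : b = a' by apply: (nearer_neighbour_uniq (z := z) eab ea'); nat_lia.
by move: Ha'; rewrite -ba'; nat_lia.
Qed.

Lemma dist_across_edge u v z w :
  e u v -> d v z < d u z -> d u w < d v w -> d w z = d w u + 1 + d v z.
Proof.
move=> euv hz hw.
have evu : e v u by rewrite sym_e.
have Bv : d w v = d w u + 1.
  by rewrite !(distC w); case: (dist_edge_cases w euv); nat_lia.
elim: {z}(d v z) {-2}z (leqnn (d v z)) hz => [|n IH] z hn hz.
  by move: hn; rewrite leqn0 dist_eq0 => /eqP <-; rewrite distxx addn0.
case E: (d v z) => [|k].
  by move/eqP: E; rewrite dist_eq0 => /eqP <-; rewrite addn0 Bv.
have [z' ez' Hz'] : exists2 z', e z z' & d z' v = k by apply: dist_S_neighbour; rewrite distC.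
have s1 := distC z' v; have s2 := distC u z; have s3 := distC u z'.
have t1 := dist_edge_le u ez'.
have IHz := IH z' ltac:(nat_lia) ltac:(nat_lia).
have ez'z : e z' z by rewrite sym_e.
case: (dist_edge_cases w ez') => H; last by have := distC w z; have := distC w z'; nat_lia.
exfalso.
(* Otherwise z and the neighbour of z' towards v would both be closer to w than z'. *)
case Ek: k => [|k'] in Hz' E hn.
  move/eqP: Hz'; rewrite dist_eq0 => /eqP Ez'; subst z'.
  have uz : u != z by apply: contraTneq hz => <-; rewrite distxx.
  by move/eqP: uz; apply; apply: (nearer_neighbour_uniq (z := w) evu ez'z); nat_lia.
have [y ey Hy] := dist_S_neighbour Hz'.
have s4 := distC y v; have s5 := distC u y; have t2 := dist_edge_le u ey.
have IHy := IH y ltac:(nat_lia) ltac:(nat_lia).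
have zy : z != y by apply/eqP => Ezy; subst y; nat_lia.
move/eqP: zy; apply; apply: (nearer_neighbour_uniq (z := w) ez'z ey).
  by have := distC w z; have := distC w z'; nat_lia.
by have := distC w z'; have := distC w y; nat_lia.
Qed.

Lemma path_dist_last_le x p w :
  path e x p -> w \in x :: p -> d w (last x p) <= size p.
Proof.
elim: p x w => [|a p IH] x w /=; first by move=> _; rewrite inE => /eqP ->; rewrite distxx.
move=> /andP [exa pp]; rewrite inE => /orP [/eqP ->|wi]; last by have := IH _ _ pp wi; nat_lia.
by have := IH _ _ pp (mem_head _ _); have := dist_edge_le (last a p) exa; nat_lia.
Qed.

Lemma geodesic_uniq x p : path e x p -> size p = d x (last x p) -> uniq (x :: p).
Proof.
elim: p x => [|a p IH] x //= /andP [exa pp] Hs.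
have Ha := path_dist_last_le pp (mem_head _ _).
have := dist_edge_le (last a p) exa => h.
have /= -> : uniq (a :: p) by apply: IH pp _; nat_lia.
rewrite andbT; apply/negP => /(path_dist_last_le pp); nat_lia.
Qed.

Lemma exists_geodesic x y : exists2 p, path e x p & last x p = y /\ size p = d x y.
Proof.
move Hn: (d x y) => n; elim: n x Hn => [|n IH] x Hn.
  by exists [::]; move/eqP: Hn; rewrite dist_eq0 => /eqP ->.
have [x' ex' /IH [p pp [lp sp]]] := dist_S_neighbour Hn.
by exists (x' :: p); rewrite /= ?ex' ?lp ?sp.
Qed.

Lemma uniq_path_dist_last x p z : path e x p -> uniq (x :: p) -> z \in x :: p ->
  d x z + d z (last x p) = d x (last x p).
Proof.
elim: p x => [|a p IH] x /=; first by move=> _ _; rewrite inE => /eqP ->; rewrite distxx.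
move=> /andP [exa pp] /andP [xn up]; set y := last a p.
have Hd : d x y = (d a y).+1.
  case: (dist_edge_cases y exa) => // H; exfalso.
  have xy : x != y by apply: contraNneq xn => ->; apply: mem_last.
  case Ex: (d x y) => [|n]; first by move/eqP: Ex; rewrite dist_eq0 (negbTE xy).
  have [b exb Hb] := dist_S_neighbour Ex.
  have bx : b != x by apply: contraTneq exb => ->; rewrite irr_e.
  (* both a and b reach y in T - x *)
  have : connect (avoid x) a b.
    apply: (connect_trans (y := y)); first by apply/connectP; exists p; rewrite ?path_avoid.
    by rewrite (sym_connect_sym (@avoid_sym x)) connect_avoid_closer //; nat_lia.
  apply/negP/avoid_neighbours_disconnected => //.
  by apply/eqP => Eab; rewrite Eab in H; nat_lia.
rewrite inE => /orP [/eqP ->|zi]; first by rewrite distxx.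
have := IH _ pp up zi; rewrite -/y => h3.
by have := dist_edge_le z exa; have := dist_triangle x z y; nat_lia.
Qed.

Lemma on_pathP v l z : on_path e v l z <-> d v z + d z l = d v l.
Proof.
split; first by case=> p /and4P [pp /eqP <- up zi]; apply: uniq_path_dist_last.
move=> H.
have [p1 pp1 [lp1 sp1]] := exists_geodesic v z.
have [p2 pp2 [lp2 sp2]] := exists_geodesic z l.
have Hp : path e v (p1 ++ p2) by rewrite cat_path pp1 lp1 pp2.
have Hl : last v (p1 ++ p2) = l by rewrite last_cat lp1 lp2.
have Hu : uniq (v :: p1 ++ p2) by apply: geodesic_uniq; rewrite // Hl size_cat; nat_lia.
exists (p1 ++ p2); rewrite Hp Hl eqxx Hu /=.
by rewrite -cat_cons mem_cat -lp1 mem_last.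
Qed.


Lemma major_of_three_neighbours m a b c :
  e m a -> e m b -> e m c -> a != b -> a != c -> b != c -> major e m.
Proof.
move=> ea eb ec ab ac bc; rewrite /major /deg.
have <- : #|[set a; b; c]| = 3.
  by rewrite -setUA !cardsU1 cards1 !inE (negbTE bc) (negbTE ab) (negbTE ac).
by apply/subset_leq_card/subsetP => y; rewrite !inE => /orP [/orP [] |] /eqP ->.
Qed.

Lemma leaf_neighbour_uniq l a b : leaf e l -> e l a -> e l b -> a = b.
Proof.
rewrite /leaf /deg => /cards1P [x Hx] ea eb.
have : a \in [set w | e l w] by rewrite inE.
have : b \in [set w | e l w] by rewrite inE.
by rewrite Hx !inE => /eqP -> /eqP ->.
Qed.

Lemma leaf_of_unique_neighbour l s : e l s -> (forall y, e l y -> y = s) -> leaf e l.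
Proof.
move=> es H; rewrite /leaf /deg.
suff -> : [set w | e l w] = [set s] by rewrite cards1.
by apply/setP => y; rewrite !inE; apply/idP/eqP => [/H | ->].
Qed.

Lemma terminal_neq v l : terminal e v l -> v != l.
Proof.
case/and3P => mv ll _; apply: contraTneq mv => Evl.
by move: ll; rewrite -Evl /leaf /major => /eqP ->.
Qed.

Lemma terminal_uniq v w l : terminal e v l -> terminal e w l -> v = w.
Proof.
case/and3P => mv _ /forallP H1; case/and3P => mw _ /forallP H2.
case: (eqVneq v w) => // vw; exfalso.
by have := H1 w; have := H2 v; rewrite mv mw vw eq_sym vw /=; nat_lia.
Qed.

Lemma two_terminals_M2 c l1 l2 :
  terminal e c l1 -> terminal e c l2 -> l1 != l2 -> c \in M2 e.
Proof.
move=> t1 t2 n12; case/and3P: (t1) => mc _ _.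
have : 1 < ter e c by apply/card_gt1P; exists l1, l2; rewrite !inE t1 t2.
by rewrite !inE mc /= => H; apply/andP; split => //; nat_lia.
Qed.

Definition branch (a b : V) : {set V} := [set z | d b z < d a z].

Lemma in_branch a b z : (z \in branch a b) = (d b z < d a z).
Proof. by rewrite inE. Qed.

Lemma branch_disjoint a b c : e a b -> e a c -> b != c -> [disjoint branch a b & branch a c].
Proof.
move=> eab eac bc; rewrite disjoint_subset; apply/subsetP => z.
rewrite !inE => hb; apply/negP => hc; case/eqP: bc.
by apply: (nearer_neighbour_uniq (z := z) eab eac); nat_lia.
Qed.

Lemma dist_through_branch a c ci z :
  e c ci -> d a c < d a ci -> z \in branch c ci -> d a z = d a c + d c z.
Proof.
move=> eci hci; rewrite in_branch => hz.
have hci' : d c a < d ci a by rewrite !(distC _ a).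
rewrite (dist_across_edge eci hz hci').
by case: (dist_edge_cases z eci); nat_lia.
Qed.

Lemma major_two_farther_neighbours a c : major e c ->
  exists c1 c2, [/\ c1 != c2, e c c1, e c c2, d a c < d a c1 & d a c < d a c2].
Proof.
move=> mc; set N := [set y | e c y]; set N' := [set y in N | d a c < d a y].
have nearer_le1 : #|N :\: N'| <= 1.
  apply/card_le1_eqP => y1 y2; rewrite !inE !negb_and -!leqNgt => /andP [+ ey1] /andP [+ ey2].
  rewrite ey1 ey2 /= => h1 h2.
  by apply: (nearer_neighbour_uniq (z := a) ey2 ey1); rewrite !(distC _ a).
have : 1 < #|N'|.
  have := cardsID N' N; have := (mc : 2 < #|N|).
  have -> : N :&: N' = N' by apply/setIidPr/subsetP => y; rewrite inE => /andP [].
  by nat_lia.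
case/card_gt1P => c1 [c2 [+ + c12]]; rewrite !inE => /andP [ec1 h1] /andP [ec2 h2].
by exists c1, c2.
Qed.

Lemma terminal_in_majorless_branch c c' : major e c -> e c c' ->
  {in branch c c', forall z, ~~ major e z} -> exists2 l, l \in branch c c' & terminal e c l.
Proof.
move=> mc ecc' nomajor.
have c'in : c' \in branch c c' by rewrite in_branch distxx dist_edge.
case: (arg_maxnP (fun i => d c i) c'in) => l lin lmax.
have {}lin : l \in branch c c' := lin; exists l => //.
have hl : d c' l < d c l by rewrite -in_branch.
have lc : 0 < d l c.
  by rewrite dist_gt0; apply: contraTneq lin => ->; rewrite in_branch distxx.
have [s es Hs] : exists2 s, e l s & d s c = (d l c).-1.
  by apply: dist_S_neighbour; rewrite prednK.
(* l is a vertex of the branch farthest from c, so its only neighbour leads back to c *)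
have leafl : leaf e l.
  apply: (leaf_of_unique_neighbour es) => y ey; apply/eqP; apply: contraT => ys.
  case: (dist_edge_cases c ey) => H.
    have eyl : e y l by rewrite sym_e.
    have : y \in branch c c'.
      rewrite in_branch; have := dist_edge_le c' eyl.
      by have := distC y c'; have := distC l c'; have := distC c y; have := distC c l; nat_lia.
    by move/lmax; have := distC c y; have := distC c l; nat_lia.
  by case/eqP: ys; apply: (nearer_neighbour_uniq (z := c) ey es); nat_lia.
apply/and3P; split => //; apply/forallP => w; apply/implyP => /andP [mw wc].
have : w \notin branch c c' by apply: contraL mw; apply: nomajor.
rewrite in_branch -leqNgt => wn.
have hw : d c w < d c' w by case: (dist_edge_cases w ecc'); nat_lia.
have := dist_across_edge ecc' hl hw.
have := distC l c; have := distC w l; have := distC w c.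
have : 0 < d c w by rewrite dist_gt0 eq_sym.
by case: (dist_edge_cases l ecc'); nat_lia.
Qed.


Definition M2_terminals : {set V} := [set l | [exists c in M2 e, terminal e c l]].

Lemma mem_M2_terminals c l : c \in M2 e -> terminal e c l -> l \in M2_terminals.
Proof. by move=> cM2 tcl; rewrite inE; apply/existsP; exists c; rewrite cM2. Qed.

Lemma card_M2_terminalsS (A B : {set V}) :
  A \subset B -> #|A :&: M2_terminals| <= #|B :&: M2_terminals|.
Proof. by move=> sAB; apply/subset_leq_card/setSI. Qed.

Lemma branch_major_M2_terminals a b : e a b -> (exists2 w, w \in branch a b & major e w) ->
  1 < #|branch a b :&: M2_terminals|.
Proof.
move=> eab [w win mw].
have Pw : (w \in branch a b) && major e w by rewrite win mw.
case: (@arg_maxnP _ w (fun i => (i \in branch a b) && major e i) (fun i => d a i) Pw).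
move=> c /andP [cin mc] cmax.
have {}cin : c \in branch a b := cin.
have [c1 [c2 [c12 ec1 ec2 h1 h2]]] := major_two_farther_neighbours a mc.
have deeper : forall ci, e c ci -> d a c < d a ci ->
    {in branch c ci, forall z, z \in branch a b /\ d a c < d a z}.
  move=> ci eci hci z zin; have Ez := dist_through_branch eci hci zin.
  have : 0 < d c z by rewrite dist_gt0; apply: contraTneq zin => <-; rewrite in_branch distxx.
  move: cin; rewrite !in_branch; have := dist_triangle b c z; nat_lia.
(* c is a deepest major vertex of the branch, so the branches beyond it are majorless *)
have majorless : forall ci, e c ci -> d a c < d a ci -> {in branch c ci, forall z, ~~ major e z}.
  move=> ci eci hci z /(deeper _ eci hci) [zin hz]; apply: contraTN hz => mz.
  by rewrite -leqNgt; apply: cmax; rewrite zin mz.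
have [l1 l1in t1] := terminal_in_majorless_branch mc ec1 (majorless _ ec1 h1).
have [l2 l2in t2] := terminal_in_majorless_branch mc ec2 (majorless _ ec2 h2).
have l12 : l1 != l2.
  by apply: contraTneq l2in => <-; rewrite (disjointFr (branch_disjoint ec1 ec2 c12) l1in).
have cM2 := two_terminals_M2 t1 t2 l12.
apply/card_gt1P; exists l1, l2.
rewrite !in_setI (mem_M2_terminals cM2 t1) (mem_M2_terminals cM2 t2) !andbT.
by split; [exact: (deeper _ ec1 h1 _ l1in).1 | exact: (deeper _ ec2 h2 _ l2in).1 |].
Qed.

Lemma two_branches_M2_terminals m a b : e m a -> e m b -> a != b -> (exists w, major e w) ->
  1 < #|(branch m a :|: branch m b) :&: M2_terminals|.
Proof.
move=> ema emb ab [w mw].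
case: (pickP [pred z in branch m a | major e z]) => [z /andP [zin mz] | noa].
  apply: leq_trans (card_M2_terminalsS (subsetUl _ _)).
  by apply: branch_major_M2_terminals; last exists z.
case: (pickP [pred z in branch m b | major e z]) => [z /andP [zin mz] | nob].
  apply: leq_trans (card_M2_terminalsS (subsetUr _ _)).
  by apply: branch_major_M2_terminals; last exists z.
have majorless_a : {in branch m a, forall z, ~~ major e z}.
  by move=> z zin; have := noa z; rewrite /= zin /= => ->.
have majorless_b : {in branch m b, forall z, ~~ major e z}.
  by move=> z zin; have := nob z; rewrite /= zin /= => ->.
case: (boolP (major e m)) => mm.
  have [l1 l1in t1] := terminal_in_majorless_branch mm ema majorless_a.
  have [l2 l2in t2] := terminal_in_majorless_branch mm emb majorless_b.
  have l12 : l1 != l2.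
    by apply: contraTneq l2in => <-; rewrite (disjointFr (branch_disjoint ema emb ab) l1in).
  have mM2 := two_terminals_M2 t1 t2 l12.
  apply/card_gt1P; exists l1, l2.
  by rewrite !in_setI !in_setU l1in l2in orbT (mem_M2_terminals mM2 t1) (mem_M2_terminals mM2 t2).
(* otherwise the branch of m containing w would give m a third neighbour *)
exfalso; have wm : w != m by apply: contraNneq mm => <-.
have [s ems hs] : exists2 s, e m s & d s w = (d m w).-1.
  by apply: dist_S_neighbour; rewrite prednK // dist_gt0 eq_sym.
have win : w \in branch m s by rewrite in_branch hs prednK // dist_gt0 eq_sym.
have sa : a != s by apply: contraTneq win => <-; exact: contraL (majorless_a w) mw.
have sb : b != s by apply: contraTneq win => <-; exact: contraL (majorless_b w) mw.
by move: mm; rewrite (major_of_three_neighbours ema emb ems ab sa sb).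
Qed.

Lemma Rset_sym x y : Rset e x y = Rset e y x.
Proof. by apply/setP => z; rewrite !inE eq_sym. Qed.

Lemma branch_sub_Rset u v x y :
  e u v -> d u y < d v y -> d x v <= d y u -> branch u v \subset Rset e x y.
Proof.
move=> euv hy hxv; apply/subsetP => z; rewrite in_branch inE => hz.
have := dist_across_edge euv hz hy; have := dist_triangle x v z; nat_lia.
Qed.

Lemma Rset_M2_terminals x y : x != y -> (exists w, major e w) ->
  1 < #|Rset e x y :&: M2_terminals|.
Proof.
move=> xy [w mw]; have dxy : 0 < d x y by rewrite dist_gt0.
have := odd_double_half (d x y); rewrite -muln2; set k := (d x y)./2.
have [m [hxm hmy]] : exists m, d x m = k /\ d m y = d x y - k.
  by apply: dist_midpoint; rewrite /k; nat_lia.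
case: (odd (d x y)) => /= Hk.
  have [c emc hcy] : exists2 c, e m c & d c y = k by apply: dist_S_neighbour; nat_lia.
  have ecm : e c m by rewrite sym_e.
  have S1 : branch c m \subset Rset e x y.
    by apply: branch_sub_Rset; rewrite // ?(distC y c); nat_lia.
  have S2 : branch m c \subset Rset e x y.
    rewrite Rset_sym; apply: branch_sub_Rset; rewrite // ?(distC y c) ?(distC m x);
    have := dist_triangle x c y; have := distC x c; nat_lia.
  case: (dist_edge_cases w emc) => Hw.
    apply: leq_trans (card_M2_terminalsS S1); apply: branch_major_M2_terminals ecm _.
    by exists w; rewrite // in_branch; nat_lia.
  apply: leq_trans (card_M2_terminalsS S2); apply: branch_major_M2_terminals emc _.
  by exists w; rewrite // in_branch; nat_lia.
have [a ema hax] : exists2 a, e m a & d a x = k.-1.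
  by apply: dist_S_neighbour; rewrite distC; nat_lia.
have [b emb hby] : exists2 b, e m b & d b y = k.-1 by apply: dist_S_neighbour; nat_lia.
have ab : a != b.
  by apply/eqP => Eab; rewrite -Eab in hby; have := dist_triangle x a y; have := distC x a; nat_lia.
apply: leq_trans (two_branches_M2_terminals ema emb ab (ex_intro _ w mw)) (card_M2_terminalsS _).
rewrite subUset; apply/andP; split.
  apply: branch_sub_Rset; rewrite // ?(distC y m) ?(distC x a);
  by have := dist_triangle x a y; have := distC x a; nat_lia.
rewrite Rset_sym; apply: branch_sub_Rset => //; have := distC x m; have := distC y b;
by have := dist_triangle y b x; have := distC x y; nat_lia.
Qed.


Lemma terminal_branch_geodesic v l u : terminal e v l -> e v u -> d u l < d v l ->
  {in branch v u, forall z, d v z + d z l = d v l}.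
Proof.
move=> tvl evu hu; case/and3P: (tvl) => mv ll /forallP closest.
have hvl : d v l = (d u l).+1 by case: (dist_edge_cases l evu); nat_lia.
suff H j z : d v z = j.+1 -> z \in branch v u -> d v z + d z l = d v l.
  move=> z zin; move: (zin); rewrite in_branch => hz.
  by case E: (d v z) hz => [|j] // _; rewrite -E; apply: (H j).
elim: j z => [|j IH] z Hz zin; move: (zin); rewrite in_branch => hz.
  have : d u z == 0 by nat_lia.
  by rewrite dist_eq0 => /eqP <-; rewrite (dist_edge evu) hvl add1n.
have [z' ezz' Hz'] : exists2 z', e z z' & d z' v = j.+1.
  by apply: dist_S_neighbour; rewrite distC.
have ez'z : e z' z by rewrite sym_e.
have z'in : z' \in branch v u.
  rewrite in_branch ltnNge; apply/negP => H.
  have H2 : d v z' < d u z' by case: (dist_edge_cases z' evu); nat_lia.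
  by have := dist_across_edge evu hz H2; rewrite (dist_edge ez'z); nat_lia.
have IHz' := IH z' (etrans (distC _ _) Hz') z'in.
have [a ez'a Ha] := dist_S_neighbour Hz'.
have za : z != a by apply/eqP => E; subst a; have := distC v z; nat_lia.
case Em: (d z' l) => [|m].
  move/eqP: Em; rewrite dist_eq0 => /eqP E; subst z'.
  by case/eqP: za; apply: leaf_neighbour_uniq ll ez'z ez'a.
(* z' lies strictly between v and l, so it is not major: its only neighbours are a and b *)
have nmz' : ~~ major e z'.
  apply/negP => mz'; have := closest z'; rewrite mz' -dist_eq0 Hz' /=.
  by have := distC l z'; have := distC l v; nat_lia.
have [b ez'b Hb] := dist_S_neighbour Em.
have ab : a != b.
  apply/eqP => E; subst b; have := dist_triangle v a l.
  by have := distC v a; have := distC z' v; nat_lia.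
have zb : z = b.
  case: (eqVneq z b) => // zb.
  by move: nmz'; rewrite (major_of_three_neighbours ez'z ez'a ez'b za zb ab).
by subst b; have := distC z' v; nat_lia.
Qed.

Lemma terminal_branch_majorless v l u : terminal e v l -> e v u -> d u l < d v l ->
  {in branch v u, forall z, ~~ major e z}.
Proof.
move=> tvl evu hu z zin; have Hz := terminal_branch_geodesic tvl evu hu zin.
case/and3P: (tvl) => mv ll /forallP closest.
have zv : z != v by apply: contraTneq zin => ->; rewrite in_branch distxx.
apply/negP => mz; have := closest z; rewrite mz zv /=.
have : 0 < d v z by rewrite dist_gt0 eq_sym.
by have := distC l z; have := distC l v; nat_lia.
Qed.

Lemma mem_Tv v l : terminal e v l -> v \in Tv e v.
Proof. by move=> tvl; rewrite inE; apply/asboolP; exists l; rewrite // on_pathP distxx. Qed.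

Lemma Tv_setD1_in_branch v z : z \in Tv e v :\ v ->
  exists l u, [/\ terminal e v l, e v u, d u l < d v l & z \in branch v u].
Proof.
rewrite !inE => /andP [zv /asboolP [l tvl /on_pathP H]].
have [s evs Hs] : exists2 s, e v s & d s z = (d v z).-1.
  by apply: dist_S_neighbour; rewrite prednK // dist_gt0 eq_sym.
have : 0 < d v z by rewrite dist_gt0 eq_sym.
exists l, s; split; rewrite ?in_branch //; last by nat_lia.
by have := dist_triangle s z l; nat_lia.
Qed.

Lemma terminal_branch_sub_Tv v l u : terminal e v l -> e v u -> d u l < d v l ->
  branch v u \subset Tv e v :\ v.
Proof.
move=> tvl evu hu; apply/subsetP => z zin.
have zv : z != v by apply: contraTneq zin => ->; rewrite in_branch distxx.
rewrite !inE zv /=; apply/asboolP; exists l => //.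
exact/on_pathP/(terminal_branch_geodesic tvl evu hu zin).
Qed.

Lemma Tv_setD1_disjoint v w : v != w -> [disjoint Tv e v :\ v & Tv e w :\ w].
Proof.
move=> vw; rewrite -setI_eq0; apply/eqP/setP => z; rewrite in_setI in_set0.
apply/negP => /andP [zv zw].
have [l [u [tvl evu hu zin]]] := Tv_setD1_in_branch zv.
have [l' [u' [twl ewu hu' zin']]] := Tv_setD1_in_branch zw.
case/and3P: (tvl) => mv _ _; case/and3P: (twl) => mw _ _.
have : w \notin branch v u by apply: contraL mw => /(terminal_branch_majorless tvl evu hu).
have : v \notin branch w u' by apply: contraL mv => /(terminal_branch_majorless twl ewu hu').
move: zin zin'; rewrite !in_branch -!leqNgt => zin zin' v1 w1.
have w2 : d v w < d u w by case: (dist_edge_cases w evu); nat_lia.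
have v2 : d w v < d u' v by case: (dist_edge_cases v ewu); nat_lia.
have S1 := dist_across_edge evu zin w2; have S2 := dist_across_edge ewu zin' v2.
have h1 : d v z = (d u z).+1 by case: (dist_edge_cases z evu); nat_lia.
have h2 : d w z = (d u' z).+1 by case: (dist_edge_cases z ewu); nat_lia.
have : 0 < d v w by rewrite dist_gt0.
by have := distC v w; have := distC w z; have := distC v z; nat_lia.
Qed.

Definition toward (v l : V) : V := odflt v [pick u | e v u && (d u l < d v l)].

Lemma towardP v l : v != l -> e v (toward v l) /\ d (toward v l) l < d v l.
Proof.
move=> vl; rewrite /toward; case: pickP => [u /andP [] // | none]; exfalso.
have vl0 : 0 < d v l by rewrite dist_gt0.
have [s evs Hs] : exists2 s, e v s & d s l = (d v l).-1.
  by apply: dist_S_neighbour; rewrite prednK.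
by have := none s; rewrite evs Hs ltn_predL vl0.
Qed.

Lemma toward_terminal_inj v l1 l2 : terminal e v l1 -> terminal e v l2 -> l1 != l2 ->
  toward v l1 != toward v l2.
Proof.
move=> t1 t2 l12; apply: contraNneq l12 => E.
have [e1 h1] := towardP (terminal_neq t1); have [e2 h2] := towardP (terminal_neq t2).
have g1 := terminal_branch_geodesic t1 e1 h1 (_ : l2 \in _); rewrite in_branch E in g1.
have g2 := terminal_branch_geodesic t2 e2 h2 (_ : l1 \in _); rewrite in_branch -E in g2.
have : d l1 l2 == 0 by have := g1 h2; have := g2 h1; have := distC l1 l2; nat_lia.
by rewrite dist_eq0.
Qed.


Lemma Rset_neighbours_sub v u1 u2 :
  e v u1 -> e v u2 -> Rset e u1 u2 \subset branch v u1 :|: branch v u2.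
Proof.
move=> e1 e2; apply/subsetP => z; rewrite in_setU !in_branch inE; apply: contraNT.
rewrite negb_or -!leqNgt => /andP [h1 h2]; apply/negPn/eqP.
by case: (dist_edge_cases z e1); case: (dist_edge_cases z e2); nat_lia.
Qed.

Variable R : realFieldType.
Local Open Scope ring_scope.

Lemma gsum_legs_ge_half_ter (g : V -> R) v : resolving e g -> v \in M2 e ->
  (ter e v)%:R / 2 <= gsum g (Tv e v :\ v).
Proof.
case=> g01 gres vM2; have g0 s : 0 <= g s by case/andP: (g01 s).
set T := [set l | terminal e v l].
have tT l : l \in T -> terminal e v l by rewrite inE.
pose leg l := branch v (toward v l).
have towardT l : l \in T -> e v (toward v l) /\ (d (toward v l) l < d v l)%N.
  by move/tT/terminal_neq/towardP.
have toward_inj : {in T &, forall l1 l2, l1 != l2 -> toward v l1 != toward v l2}.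
  by move=> l1 l2 /tT t1 /tT t2; apply: toward_terminal_inj.
have leg_disj : {in T &, forall l1 l2, l1 != l2 -> [disjoint leg l1 & leg l2]}.
  move=> l1 l2 i1 i2 l12; apply: branch_disjoint (toward_inj _ _ i1 i2 l12).
    exact: (towardT _ i1).1.
  exact: (towardT _ i2).1.
apply: le_trans (sum_gsum_disjoint_le g0 leg_disj _); last first.
  by move=> l lT; have [e1 h1] := towardT _ lT; apply: terminal_branch_sub_Tv (tT _ lT) e1 h1.
apply: half_card_le_sum; first by move: vM2; rewrite !inE => /andP [].
move=> l1 l2 i1 i2 l12; rewrite -gsumU ?leg_disj //.
apply: le_trans (gres _ _ (toward_inj _ _ i1 i2 l12)) _.
apply: gsum_subset => //; apply: Rset_neighbours_sub.
  exact: (towardT _ i1).1.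
exact: (towardT _ i2).1.
Qed.

Lemma sum_legs_le_gsum (g : V -> R) : (forall s, 0 <= g s) ->
  \sum_(v in M2 e) gsum g (Tv e v :\ v) <= gsum g setT.
Proof.
by move=> g0; apply: sum_gsum_disjoint_le => // v w _ _; apply: Tv_setD1_disjoint.
Qed.

Definition M2_terminal_weight (z : V) : R := if z \in M2_terminals then 2^-1 else 0.

Lemma resolving_M2_terminal_weight : (exists w, major e w) -> resolving e M2_terminal_weight.
Proof.
move=> has_major; split=> [s | x y xy].
  by rewrite /M2_terminal_weight; case: ifP => _; apply/andP; split; lra.
case/card_gt1P: (Rset_M2_terminals xy has_major) => l1 [l2 [+ + l12]].
rewrite !in_setI => /andP [r1 t1] /andP [r2 t2].
rewrite /gsum (bigD1 l1) //= (bigD1 l2) /=; last by rewrite r2 eq_sym l12.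
have : 0 <= \sum_(i | (i \in Rset e x y) && (i != l1) && (i != l2)) M2_terminal_weight i.
  by apply: sumr_ge0 => i _; rewrite /M2_terminal_weight; case: ifP => _; lra.
by rewrite /M2_terminal_weight t1 t2; lra.
Qed.

Lemma gsum_M2_terminal_weight :
  gsum M2_terminal_weight setT = \sum_(v in M2 e) (ter e v)%:R / 2.
Proof.
have weightE z : M2_terminal_weight z = \sum_(v in M2 e) (if terminal e v z then 2^-1 else 0).
  rewrite /M2_terminal_weight inE; case: existsP => [[c /andP [cM2 tc]] | none].
    rewrite (bigD1 c) //= tc big1 ?addr0 // => v /andP [_ vc].
    by case: ifP => // tv; case/eqP: vc; apply: terminal_uniq tv tc.
  by rewrite big1 // => v vM2; case: ifP => // tv; case: none; exists v; rewrite vM2.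
rewrite /gsum (eq_bigr _ (fun z _ => weightE z)) exchange_big /=; apply: eq_bigr => v _.
transitivity (\sum_(z in [set l | terminal e v l]) (2^-1 : R)).
  by rewrite [LHS]big_mkcond [RHS]big_mkcond; apply: eq_bigr => z _; rewrite !inE.
by rewrite sumr_const /ter -[2^-1 *+ _]mulr_natl.
Qed.

End Tree.

Lemma is_dimf_min_resolving (V : finType) (e : rel V) (R : realFieldType) (g : V -> R) :
  min_resolving e g -> is_dimf e (gsum g setT).
Proof. by case=> gres gmin; split; [exists g | exact: gmin]. Qed.

Local Open Scope ring_scope.

Theorem lemma3p13 (R : realFieldType) (V : finType) (e : rel V) (g : V -> R) :
  is_tree e -> (1 <= ex e)%N -> min_resolving e g ->
  (forall v, v \in M2 e -> gsum g (Tv e v :\ v) = (ter e v)%:R / 2) /\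
  is_dimf e (\sum_(v in M2 e) (gsum g (Tv e v) - g v)).
Proof.
case=> sym_e irr_e conn_e acyc_e ex1 gmin; case: (gmin) => gres gle.
have g0 s : 0 <= g s by case: gres => /(_ s) /andP [].
have has_major : exists w, major e w.
  by move: ex1; rewrite card_gt0 => /set0Pn [w]; rewrite inE => /andP [mw _]; exists w.
have lower := gsum_legs_ge_half_ter sym_e irr_e conn_e acyc_e gres.
have upper : gsum g setT <= \sum_(v in M2 e) (ter e v)%:R / 2.
  rewrite -(gsum_M2_terminal_weight e R); apply: gle.
  exact: resolving_M2_terminal_weight sym_e irr_e conn_e acyc_e R has_major.
have legs := sum_legs_le_gsum sym_e irr_e conn_e acyc_e g0.
have legsE := ler_sum_eq lower (le_trans legs upper).
split=> [v /legsE // | ].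
suff -> : \sum_(v in M2 e) (gsum g (Tv e v) - g v) = gsum g setT.
  exact: is_dimf_min_resolving.
have -> : \sum_(v in M2 e) (gsum g (Tv e v) - g v) = \sum_(v in M2 e) gsum g (Tv e v :\ v).
  apply: eq_bigr => v vM2; rewrite gsum_setD1 //.
  have [l tvl] : exists l, terminal e v l.
    by move: vM2; rewrite !inE => /andP [/andP [_ /card_gt0P [l]]]; rewrite inE; exists l.
  exact: (mem_Tv sym_e irr_e conn_e acyc_e tvl).
by apply/eqP; rewrite eq_le legs -(eq_bigr _ legsE) upper.
Qed.
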